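(* Let $\mathcal C$ be a hyper-extensive category with finite products and limits of $\omega^{\mathrm{op}}$-chains, in which finite products commute with countable coproducts. Let $\Sigma$ be an object, $\Sigma^n$ its $n$-fold power, $\Sigma^*=\coprod_{n<\omega}\Sigma^n$, and $\Sigma^\omega=\lim_{n<\omega}\Sigma^n$ (the limit of the chain $1\leftarrow\Sigma\leftarrow\Sigma\times\Sigma\leftarrow\cdots$ of projections). Then for the functor $HX=\Sigma\times X$ the free cia on an object $Y$ is $TY\cong\Sigma^*\times Y+\Sigma^\omega$; and for any object $W$ the functor $H'X=W+\Sigma\times X$ has free cias $T'Y\cong\Sigma^*\times(W+Y)+\Sigma^\omega$.
   Context: Hyper-extensive category: countable coproducts that are universal (pullbacks along arbitrary morphisms exist and preserve them), disjoint (injections monic, pairwise pullbacks initial), and coherent (a countable family of pairwise disjoint coproduct injections has copairing a coproduct injection). For an endofunctor $G$, an algebra $a\colon GA\to A$ is a cia if every $e\colon X\to GX+A$ admits a unique $s$ with $s=[a,\mathrm{id}_A]\cdot(Gs+\mathrm{id}_A)\cdot e$; a free cia on $Y$ is a cia with a morphism from $Y$ through which every morphism from $Y$ into a cia factors uniquely via an algebra morphism. *)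

Set Implicit Arguments.
Unset Strict Implicit.

Record Category : Type := {
  Ob :> Type;
  Hom : Ob -> Ob -> Type;
  idm : forall A, Hom A A;
  comp : forall A B C, Hom B C -> Hom A B -> Hom A C;
  comp_idl : forall A B (f : Hom A B), comp (idm B) f = f;
  comp_idr : forall A B (f : Hom A B), comp f (idm A) = f;
  comp_assoc : forall A B C D (f : Hom A B) (g : Hom B C) (h : Hom C D),
      comp h (comp g f) = comp (comp h g) f
}.
Arguments Hom {_} _ _.
Arguments idm {_} _.
Arguments comp {_ _ _ _} _ _.
Notation "g ∘ f" := (comp g f) (at level 40, left associativity).

Section Notions.
Variable C : Category.

Definition monic {A B : C} (m : Hom A B) : Prop :=
  forall Z (x y : Hom Z A), m ∘ x = m ∘ y -> x = y.

Definition is_iso_obj (A B : C) : Prop :=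
  exists (f : Hom A B) (g : Hom B A), g ∘ f = idm A /\ f ∘ g = idm B.

Definition is_initial (P : C) : Prop := forall Z : C, exists! h : Hom P Z, True.

(** countable index types: injectable into nat (includes finite ones) *)
Definition countable (I : Type) : Prop :=
  exists f : I -> nat, forall x y, f x = f y -> x = y.

Definition is_coproduct (I : Type) (A : I -> C) (S : C) (inj : forall i, Hom (A i) S) : Prop :=
  forall Z (f : forall i, Hom (A i) Z), exists! h : Hom S Z, forall i, h ∘ inj i = f i.

Definition is_bincoproduct (A B S : C) (i1 : Hom A S) (i2 : Hom B S) : Prop :=
  forall Z (f : Hom A Z) (g : Hom B Z), exists! h : Hom S Z, h ∘ i1 = f /\ h ∘ i2 = g.

Definition is_coproduct_injection {A S : C} (m : Hom A S) : Prop :=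
  exists (B : C) (n : Hom B S), is_bincoproduct m n.

Definition is_pullback {A B D : C} (f : Hom A D) (g : Hom B D)
  (P : C) (p : Hom P A) (q : Hom P B) : Prop :=
  f ∘ p = g ∘ q /\
  forall Z (x : Hom Z A) (y : Hom Z B), f ∘ x = g ∘ y ->
    exists! u : Hom Z P, p ∘ u = x /\ q ∘ u = y.

Definition has_countable_coproducts : Prop :=
  forall (I : Type), countable I -> forall A : I -> C,
    exists (S : C) (inj : forall i, Hom (A i) S), is_coproduct inj.

Definition coproducts_universal : Prop :=
  forall (I : Type), countable I -> forall (A : I -> C) (S : C) (inj : forall i, Hom (A i) S),
    is_coproduct inj ->
    forall (B : C) (f : Hom B S),
      (forall i, exists (P : C) (p : Hom P (A i)) (q : Hom P B), is_pullback (inj i) f p q) /\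
      (forall (P : I -> C) (p : forall i, Hom (P i) (A i)) (q : forall i, Hom (P i) B),
          (forall i, is_pullback (inj i) f (p i) (q i)) -> is_coproduct q).

Definition coproducts_disjoint : Prop :=
  forall (I : Type), countable I -> forall (A : I -> C) (S : C) (inj : forall i, Hom (A i) S),
    is_coproduct inj ->
    (forall i, monic (inj i)) /\
    (forall i j, i <> j -> forall (P : C) (p : Hom P (A i)) (q : Hom P (A j)),
        is_pullback (inj i) (inj j) p q -> is_initial P).

Definition coproducts_coherent : Prop :=
  forall (I : Type), countable I -> forall (A : I -> C) (S : C) (m : forall i, Hom (A i) S),
    (forall i, is_coproduct_injection (m i)) ->
    (forall i j, i <> j -> forall (P : C) (p : Hom P (A i)) (q : Hom P (A j)),
        is_pullback (m i) (m j) p q -> is_initial P) ->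
    forall (D : C) (inj : forall i, Hom (A i) D), is_coproduct inj ->
    forall u : Hom D S, (forall i, u ∘ inj i = m i) -> is_coproduct_injection u.

Definition hyper_extensive : Prop :=
  has_countable_coproducts /\ coproducts_universal /\ coproducts_disjoint /\ coproducts_coherent.

Record Terminal : Type := {
  t_obj : C;
  t_bang : forall Z : C, Hom Z t_obj;
  t_uniq : forall Z (h : Hom Z t_obj), h = t_bang Z
}.

Record BinProduct (X Y : C) : Type := {
  bp_obj : C;
  bp_p1 : Hom bp_obj X;
  bp_p2 : Hom bp_obj Y;
  bp_pair : forall Z : C, Hom Z X -> Hom Z Y -> Hom Z bp_obj;
  bp_beta1 : forall Z (f : Hom Z X) (g : Hom Z Y), bp_p1 ∘ bp_pair f g = f;
  bp_beta2 : forall Z (f : Hom Z X) (g : Hom Z Y), bp_p2 ∘ bp_pair f g = g;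
  bp_eta : forall Z (h : Hom Z bp_obj), h = bp_pair (bp_p1 ∘ h) (bp_p2 ∘ h)
}.

Record BinCoproduct (X Y : C) : Type := {
  bc_obj : C;
  bc_i1 : Hom X bc_obj;
  bc_i2 : Hom Y bc_obj;
  bc_copair : forall Z : C, Hom X Z -> Hom Y Z -> Hom bc_obj Z;
  bc_beta1 : forall Z (f : Hom X Z) (g : Hom Y Z), bc_copair f g ∘ bc_i1 = f;
  bc_beta2 : forall Z (f : Hom X Z) (g : Hom Y Z), bc_copair f g ∘ bc_i2 = g;
  bc_eta : forall Z (h : Hom bc_obj Z), h = bc_copair (h ∘ bc_i1) (h ∘ bc_i2)
}.

Variable bp : forall X Y : C, BinProduct X Y.
Variable bc : forall X Y : C, BinCoproduct X Y.

Definition prodO (X Y : C) : C := bp_obj (bp X Y).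
Definition prodM {X X' Y Y' : C} (f : Hom X X') (g : Hom Y Y') : Hom (prodO X Y) (prodO X' Y') :=
  bp_pair (bp X' Y') (f ∘ bp_p1 (bp X Y)) (g ∘ bp_p2 (bp X Y)).
Definition coprodO (X Y : C) : C := bc_obj (bc X Y).
Definition coprodM {X X' Y Y' : C} (f : Hom X X') (g : Hom Y Y') : Hom (coprodO X Y) (coprodO X' Y') :=
  bc_copair (bc X Y) (bc_i1 (bc X' Y') ∘ f) (bc_i2 (bc X' Y') ∘ g).
Definition copairM {X Y Z : C} (f : Hom X Z) (g : Hom Y Z) : Hom (coprodO X Y) Z :=
  bc_copair (bc X Y) f g.
Definition inlM {X Y : C} : Hom X (coprodO X Y) := bc_i1 (bc X Y).
Definition inrM {X Y : C} : Hom Y (coprodO X Y) := bc_i2 (bc X Y).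

Definition products_commute_with_coproducts : Prop :=
  forall (I : Type), countable I -> forall (A : I -> C) (S : C) (inj : forall i, Hom (A i) S),
    is_coproduct inj ->
    forall X : C, is_coproduct (fun i => prodM (idm X) (inj i)).

Definition is_chain_limit (D : nat -> C) (d : forall n, Hom (D (S n)) (D n))
  (L : C) (pi : forall n, Hom L (D n)) : Prop :=
  (forall n, d n ∘ pi (S n) = pi n) /\
  forall Z (x : forall n, Hom Z (D n)), (forall n, d n ∘ x (S n) = x n) ->
    exists! u : Hom Z L, forall n, pi n ∘ u = x n.

Definition has_chain_limits : Prop :=
  forall (D : nat -> C) (d : forall n, Hom (D (S n)) (D n)),
    exists (L : C) (pi : forall n, Hom L (D n)), is_chain_limit d pi.

Variable t : Terminal.
Variable Sg : C.

Fixpoint pow (n : nat) : C :=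
  match n with
  | O => t_obj t
  | S m => prodO Sg (pow m)
  end.

(** projection Σ^(n+1) -> Σ^n forgetting the last factor *)
Fixpoint powproj (n : nat) : Hom (pow (S n)) (pow n) :=
  match n return Hom (pow (S n)) (pow n) with
  | O => t_bang t (pow 1)
  | S m => prodM (idm Sg) (powproj m)
  end.

Section Cia.
Variable G0 : C -> C.
Variable G1 : forall X Y : C, Hom X Y -> Hom (G0 X) (G0 Y).

Definition is_cia (A : C) (a : Hom (G0 A) A) : Prop :=
  forall (X : C) (e : Hom X (coprodO (G0 X) A)),
    exists! s : Hom X A, s = copairM a (idm A) ∘ coprodM (G1 s) (idm A) ∘ e.

Definition is_algebra_morphism (A : C) (a : Hom (G0 A) A) (B : C) (b : Hom (G0 B) B)
  (h : Hom A B) : Prop := h ∘ a = b ∘ G1 h.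

Definition is_free_cia (Y : C) (A : C) (a : Hom (G0 A) A) (eta : Hom Y A) : Prop :=
  is_cia a /\
  forall (B : C) (b : Hom (G0 B) B), is_cia b ->
    forall f : Hom Y B,
      exists! h : Hom A B, is_algebra_morphism a b h /\ h ∘ eta = f.
End Cia.

Definition H0 (X : C) : C := prodO Sg X.
Definition H1 (X Y : C) (f : Hom X Y) : Hom (H0 X) (H0 Y) := prodM (idm Sg) f.
Definition H'0 (W X : C) : C := coprodO W (prodO Sg X).
Definition H'1 (W X Y : C) (f : Hom X Y) : Hom (H'0 W X) (H'0 W Y) :=
  coprodM (idm W) (prodM (idm Sg) f).

End Notions.

(* The free cia for [Σ × -] on [Y] is the final coalgebra of [Σ × - + Y] made into an algebra by
   Lambek's lemma, and a free cia for [W + Σ × -] on [Y] is a free cia for [Σ × -] on [W + Y].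
   The final coalgebra is [Y × Σ^* + Σ^ω]: a finite word outputs its [y] when empty and otherwise
   splits off its first letter, while [Σ^ω ≅ Σ × Σ^ω] is the final [Σ × -]-coalgebra.
   For a coalgebra [c : X → Σ × X + Y], pulling back along coproduct injections cuts out the
   summands [X_n] of points that reach [Y] after exactly [n] letters. They are pairwise disjoint,
   so by coherence [∐ X_n] is a summand of [X], and [c] restricts to a [Σ × -]-coalgebra on its
   complement. The levels map into [Y × Σ^n], the complement into [Σ^ω]; a coalgebra morphism
   cannot send any part of the complement into finite words, since that part would reach [Y]. *)

From Stdlib Require Import ssreflect ClassicalEpsilon.

Set Implicit Arguments.
Unset Strict Implicit.

Section FreeCia.
Variables (C : Category) (bp : forall X Y : C, BinProduct X Y) (bc : forall X Y : C, BinCoproduct X Y).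

Local Notation "X ⊗ Y" := (prodO bp X Y) (at level 35).
Local Notation "X ⊕ Y" := (coprodO bc X Y) (at level 36).
Local Notation π1 := (bp_p1 (bp _ _)).
Local Notation π2 := (bp_p2 (bp _ _)).
Local Notation "⟨ f , g ⟩" := (bp_pair (bp _ _) f g).
Local Notation ι1 := (inlM bc).
Local Notation ι2 := (inrM bc).
Local Notation "[ f , g ]" := (copairM bc f g).
Local Notation "f ⊠ g" := (prodM bp f g) (at level 35).
Local Notation "f ⊞ g" := (coprodM bc f g) (at level 36).

Lemma comp_assocr (A B D E : C) (f : Hom A B) (g : Hom B D) (h : Hom D E) :
  h ∘ g ∘ f = h ∘ (g ∘ f).
Proof. by rewrite comp_assoc. Qed.

Lemma fst_pair (X Y Z : C) (f : Hom Z X) (g : Hom Z Y) : π1 ∘ ⟨f, g⟩ = f.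
Proof. exact: bp_beta1. Qed.
Lemma snd_pair (X Y Z : C) (f : Hom Z X) (g : Hom Z Y) : π2 ∘ ⟨f, g⟩ = g.
Proof. exact: bp_beta2. Qed.
Lemma pair_ext (X Y Z : C) (h k : Hom Z (X ⊗ Y)) :
  π1 ∘ h = π1 ∘ k -> π2 ∘ h = π2 ∘ k -> h = k.
Proof. by move=> E1 E2; rewrite (bp_eta h) (bp_eta k) E1 E2. Qed.
Lemma fst_prodM (X X' Y Y' : C) (f : Hom X X') (g : Hom Y Y') : π1 ∘ (f ⊠ g) = f ∘ π1.
Proof. exact: fst_pair. Qed.
Lemma snd_prodM (X X' Y Y' : C) (f : Hom X X') (g : Hom Y Y') : π2 ∘ (f ⊠ g) = g ∘ π2.
Proof. exact: snd_pair. Qed.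

Lemma copair_inl (X Y Z : C) (f : Hom X Z) (g : Hom Y Z) : [f, g] ∘ ι1 = f.
Proof. exact: bc_beta1. Qed.
Lemma copair_inr (X Y Z : C) (f : Hom X Z) (g : Hom Y Z) : [f, g] ∘ ι2 = g.
Proof. exact: bc_beta2. Qed.
Lemma copair_ext (X Y Z : C) (h k : Hom (X ⊕ Y) Z) :
  h ∘ ι1 = k ∘ ι1 -> h ∘ ι2 = k ∘ ι2 -> h = k.
Proof. by move=> E1 E2; rewrite (bc_eta h) (bc_eta k) E1 E2. Qed.
Lemma coprodM_inl (X X' Y Y' : C) (f : Hom X X') (g : Hom Y Y') : (f ⊞ g) ∘ ι1 = ι1 ∘ f.
Proof. exact: copair_inl. Qed.
Lemma coprodM_inr (X X' Y Y' : C) (f : Hom X X') (g : Hom Y Y') : (f ⊞ g) ∘ ι2 = ι2 ∘ g.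
Proof. exact: copair_inr. Qed.

Lemma comp_rewrite (A B D E : C) (a : Hom B D) (b : Hom A B) (c : Hom A D) {h : Hom E A} :
  a ∘ b = c -> a ∘ (b ∘ h) = c ∘ h.
Proof. by move=> <-; rewrite comp_assoc. Qed.

Ltac cat_simpl :=
  repeat progress rewrite -?comp_assoc ?comp_idl ?comp_idr
    ?fst_pair ?snd_pair ?fst_prodM ?snd_prodM ?copair_inl ?copair_inr ?coprodM_inl ?coprodM_inr
    ?(comp_rewrite (fst_pair _ _)) ?(comp_rewrite (snd_pair _ _))
    ?(comp_rewrite (fst_prodM _ _)) ?(comp_rewrite (snd_prodM _ _))
    ?(comp_rewrite (copair_inl _ _)) ?(comp_rewrite (copair_inr _ _))
    ?(comp_rewrite (coprodM_inl _ _)) ?(comp_rewrite (coprodM_inr _ _)).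

Lemma prodM_id (X Y : C) : idm X ⊠ idm Y = idm _.
Proof. by apply: pair_ext; cat_simpl. Qed.
Lemma prodM_comp (X X' X'' Y Y' Y'' : C)
  (f : Hom X X') (g : Hom Y Y') (f' : Hom X' X'') (g' : Hom Y' Y'') :
  (f' ⊠ g') ∘ (f ⊠ g) = (f' ∘ f) ⊠ (g' ∘ g).
Proof. by apply: pair_ext; cat_simpl. Qed.
Lemma coprodM_id (X Y : C) : idm X ⊞ idm Y = idm _.
Proof. by apply: copair_ext; cat_simpl. Qed.
Lemma coprodM_comp (X X' X'' Y Y' Y'' : C)
  (f : Hom X X') (g : Hom Y Y') (f' : Hom X' X'') (g' : Hom Y' Y'') :
  (f' ⊞ g') ∘ (f ⊞ g) = (f' ∘ f) ⊞ (g' ∘ g).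
Proof. by apply: copair_ext; cat_simpl. Qed.
Lemma copair_coprodM (X X' Y Y' Z : C) (f : Hom X X') (g : Hom Y Y') (f' : Hom X' Z) (g' : Hom Y' Z) :
  [f', g'] ∘ (f ⊞ g) = [f' ∘ f, g' ∘ g].
Proof. by apply: copair_ext; cat_simpl. Qed.

Lemma pair_comp (X Y Z W : C) (f : Hom Z X) (g : Hom Z Y) (h : Hom W Z) :
  ⟨f, g⟩ ∘ h = ⟨f ∘ h, g ∘ h⟩.
Proof. by apply: pair_ext; cat_simpl. Qed.

Lemma prodM_monic (X A B : C) (f : Hom A B) : monic f -> monic (idm X ⊠ f).
Proof.
move=> Hf Z a b E; apply: pair_ext.
- by move/(f_equal (fun x => π1 ∘ x)): E; cat_simpl.
- by apply: Hf; move/(f_equal (fun x => π2 ∘ x)): E; cat_simpl.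
Qed.

Definition exch {A B D : C} : Hom (A ⊗ (B ⊗ D)) (B ⊗ (A ⊗ D)) :=
  ⟨π1 ∘ π2, ⟨π1, π2 ∘ π2⟩⟩.

Lemma exch_exch (A B D : C) : exch ∘ (exch : Hom (A ⊗ (B ⊗ D)) _) = idm _.
Proof. by rewrite /exch; apply: pair_ext; cat_simpl; rewrite // pair_comp; apply: pair_ext; cat_simpl. Qed.

Lemma prodM_idl_comp (X A B D : C) (f : Hom A B) (g : Hom B D) :
  idm X ⊠ (g ∘ f) = (idm X ⊠ g) ∘ (idm X ⊠ f).
Proof. by rewrite prodM_comp comp_idl. Qed.

Definition swap {A B : C} : Hom (A ⊗ B) (B ⊗ A) := ⟨π2, π1⟩.

Lemma swap_swap (A B : C) : swap ∘ (swap : Hom (A ⊗ B) _) = idm _.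
Proof. by rewrite /swap; apply: pair_ext; cat_simpl. Qed.

Lemma swap_summand_iso (A B D : C) : is_iso_obj (A ⊗ B ⊕ D) (B ⊗ A ⊕ D).
Proof.
by exists (swap ⊞ idm D), (swap ⊞ idm D); split; rewrite coprodM_comp swap_swap comp_idl coprodM_id.
Qed.

Lemma bincoproduct_canonical (X Y : C) : is_bincoproduct (ι1 : Hom X (X ⊕ Y)) ι2.
Proof.
move=> Z f g; exists [f, g]; split; first by rewrite copair_inl copair_inr.
by move=> h [<- <-]; apply: copair_ext; rewrite ?copair_inl ?copair_inr.
Qed.

Lemma bincoproduct_sym (A B S : C) (i1 : Hom A S) (i2 : Hom B S) :
  is_bincoproduct i1 i2 -> is_bincoproduct i2 i1.
Proof.
move=> H Z f g; have [h [[E1 E2] U]] := H Z g f.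
by exists h; split=> // k [K1 K2]; apply: U.
Qed.

Lemma bincoproduct_ext (A B S : C) (i1 : Hom A S) (i2 : Hom B S) (H : is_bincoproduct i1 i2)
  Z (h k : Hom S Z) : h ∘ i1 = k ∘ i1 -> h ∘ i2 = k ∘ i2 -> h = k.
Proof.
move=> E1 E2; have [u [_ U]] := H Z (k ∘ i1) (k ∘ i2).
by rewrite -(U h) ?(U k).
Qed.

Definition coproduct_map I (A : I -> C) S (inj : forall i, Hom (A i) S) (H : is_coproduct inj)
  Z (f : forall i, Hom (A i) Z) : Hom S Z :=
  proj1_sig (constructive_indefinite_description _ (H Z f)).

Lemma coproduct_map_inj I (A : I -> C) S (inj : forall i, Hom (A i) S) (H : is_coproduct inj)
  Z (f : forall i, Hom (A i) Z) i : coproduct_map H f ∘ inj i = f i.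
Proof. exact: (proj1 (proj2_sig (constructive_indefinite_description _ (H Z f))) i). Qed.

Lemma coproduct_ext I (A : I -> C) S (inj : forall i, Hom (A i) S) (H : is_coproduct inj)
  Z (h k : Hom S Z) : (forall i, h ∘ inj i = k ∘ inj i) -> h = k.
Proof.
move=> E; have [u [_ U]] := H Z (fun i => k ∘ inj i).
by rewrite -(U h) ?(U k).
Qed.

Definition bincoproduct_map (A B S : C) (i1 : Hom A S) (i2 : Hom B S) (H : is_bincoproduct i1 i2)
  Z (f : Hom A Z) (g : Hom B Z) : Hom S Z :=
  proj1_sig (constructive_indefinite_description _ (H Z f g)).

Lemma bincoproduct_map_1 (A B S : C) (i1 : Hom A S) (i2 : Hom B S) (H : is_bincoproduct i1 i2)
  Z (f : Hom A Z) (g : Hom B Z) : bincoproduct_map H f g ∘ i1 = f.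
Proof. exact: (proj1 (proj1 (proj2_sig (constructive_indefinite_description _ (H Z f g))))). Qed.

Lemma bincoproduct_map_2 (A B S : C) (i1 : Hom A S) (i2 : Hom B S) (H : is_bincoproduct i1 i2)
  Z (f : Hom A Z) (g : Hom B Z) : bincoproduct_map H f g ∘ i2 = g.
Proof. exact: (proj2 (proj1 (proj2_sig (constructive_indefinite_description _ (H Z f g))))). Qed.

Lemma initial_ext (P Z : C) : is_initial P -> forall h k : Hom P Z, h = k.
Proof. by move=> HP h k; have [u [_ U]] := HP Z; rewrite -(U h) ?(U k). Qed.

Definition bool_family (A B : C) (b : bool) : C := if b then A else B.

Definition bool_injections (A B S : C) (i1 : Hom A S) (i2 : Hom B S) (b : bool) :
  Hom (bool_family A B b) S :=
  if b return Hom (bool_family A B b) S then i1 else i2.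

Lemma bincoproduct_bool_coproduct (A B S : C) (i1 : Hom A S) (i2 : Hom B S) :
  is_bincoproduct i1 i2 -> is_coproduct (bool_injections i1 i2).
Proof.
move=> H Z f; have [h [[E1 E2] U]] := H Z (f true) (f false).
exists h; split; first by case.
by move=> k Hk; apply: U; split; [exact: (Hk true) | exact: (Hk false)].
Qed.

Lemma bool_coproduct_bincoproduct (A : bool -> C) S (inj : forall b, Hom (A b) S) :
  is_coproduct inj -> is_bincoproduct (inj true) (inj false).
Proof.
move=> H Z f g.
have [h [Hh U]] := H Z (fun b => if b return Hom (A b) Z then f else g).
exists h; split; first by split; [exact: (Hh true) | exact: (Hh false)].
by move=> k [E1 E2]; apply: U; case.
Qed.

Lemma countable_bool : countable bool.
Proof. by exists (fun b : bool => if b then 0 else 1); case; case. Qed.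

Lemma countable_nat : countable nat.
Proof. by exists id. Qed.

Lemma countable_Empty_set : countable Empty_set.
Proof. by exists (fun e : Empty_set => match e with end); case. Qed.

Lemma choose_pullbacks I (A : I -> C) (B : C) (S : C) (m : forall i, Hom (A i) S) (f : Hom B S) :
  (forall i, exists P (p : Hom P (A i)) (q : Hom P B), is_pullback (m i) f p q) ->
  exists (P : I -> C) (p : forall i, Hom (P i) (A i)) (q : forall i, Hom (P i) B),
    forall i, is_pullback (m i) f (p i) (q i).
Proof.
move=> H.
pose k1 i := constructive_indefinite_description _ (H i).
pose k2 i := constructive_indefinite_description _ (proj2_sig (k1 i)).
pose k3 i := constructive_indefinite_description _ (proj2_sig (k2 i)).
exists (fun i => proj1_sig (k1 i)), (fun i => proj1_sig (k2 i)), (fun i => proj1_sig (k3 i)).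
by move=> i; exact: (proj2_sig (k3 i)).
Qed.

Section FinalCoalgebra.
Variables (G0 : C -> C) (G1 : forall X Y : C, Hom X Y -> Hom (G0 X) (G0 Y)).
Local Notation G f := (G1 f).
Hypothesis G_id : forall X : C, G (idm X) = idm (G0 X).
Hypothesis G_comp : forall (X1 X2 X3 : C) (f : Hom X1 X2) (g : Hom X2 X3), G (g ∘ f) = G g ∘ G f.
Variable Y : C.
Local Notation F f := (G f ⊞ idm Y).

Lemma F_id (X : C) : F (idm X) = idm _.
Proof. by rewrite G_id coprodM_id. Qed.

Lemma F_comp (X1 X2 X3 : C) (f : Hom X1 X2) (g : Hom X2 X3) : F (g ∘ f) = F g ∘ F f.
Proof. by rewrite coprodM_comp G_comp comp_idl. Qed.

Definition is_final_coalgebra (T : C) (tau : Hom T (G0 T ⊕ Y)) : Prop :=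
  forall X (c : Hom X (G0 X ⊕ Y)), exists! u : Hom X T, tau ∘ u = F u ∘ c.

Variables (T : C) (tau : Hom T (G0 T ⊕ Y)).
Hypothesis T_final : is_final_coalgebra tau.

Lemma final_coalgebra_morphism_unique X (c : Hom X (G0 X ⊕ Y)) (u v : Hom X T) :
  tau ∘ u = F u ∘ c -> tau ∘ v = F v ∘ c -> u = v.
Proof. by move=> Eu Ev; have [w [_ U]] := T_final c; rewrite -(U u) ?(U v). Qed.

Lemma lambek : exists l : Hom (G0 T ⊕ Y) T, l ∘ tau = idm T /\ tau ∘ l = idm _.
Proof.
have [l [El _]] := T_final (F tau); exists l.
have E : l ∘ tau = idm T.
  apply: (final_coalgebra_morphism_unique (c := tau)); last by rewrite comp_idr F_id comp_idl.
  by rewrite comp_assoc El F_comp !comp_assocr.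
by split=> //; rewrite El -F_comp E F_id.
Qed.

Variables (l : Hom (G0 T ⊕ Y) T).
Hypotheses (l_tau : l ∘ tau = idm T) (tau_l : tau ∘ l = idm _).

Definition final_algebra : Hom (G0 T) T := l ∘ ι1.
Definition final_unit : Hom Y T := l ∘ ι2.

Section Iteration.
Variables (X : C) (e : Hom X (G0 X ⊕ T)).

(* A flat equation [e] becomes a coalgebra on [X ⊕ T]: variables are unfolded once by [e],
   and the values in [T] are unfolded by [tau]. *)
Definition unfold_step : Hom (G0 X ⊕ T) (G0 (X ⊕ T) ⊕ Y) := [ι1 ∘ G ι1, F ι2 ∘ tau].
Definition equation_coalgebra : Hom (X ⊕ T) (G0 (X ⊕ T) ⊕ Y) := [unfold_step ∘ e, F ι2 ∘ tau].

Lemma F_copair_unfold_step (s : Hom X T) :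
  F [s, idm T] ∘ unfold_step = tau ∘ [final_algebra ∘ G s, idm T].
Proof.
rewrite /final_algebra; apply: copair_ext; cat_simpl.
- by rewrite -G_comp copair_inl (comp_rewrite tau_l) comp_idl.
- by rewrite comp_assoc -F_comp copair_inr F_id comp_idl.
Qed.

Lemma solution_coalgebra_morphism (s : Hom X T) :
  s = [final_algebra, idm T] ∘ (G s ⊞ idm T) ∘ e <->
  tau ∘ [s, idm T] = F [s, idm T] ∘ equation_coalgebra.
Proof.
rewrite copair_coprodM comp_idl /equation_coalgebra; split=> [Es | E].
- apply: copair_ext; cat_simpl.
  + by rewrite {1}Es !comp_assoc F_copair_unfold_step.
  + by rewrite comp_assoc -F_comp copair_inr F_id comp_idl.
- have E1 : tau ∘ s = tau ∘ ([final_algebra ∘ G s, idm T] ∘ e).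
    transitivity (tau ∘ [s, idm T] ∘ ι1); first by rewrite comp_assocr copair_inl.
    by rewrite E comp_assocr copair_inl comp_assoc F_copair_unfold_step comp_assocr.
  transitivity (l ∘ (tau ∘ s)); first by rewrite comp_assoc l_tau comp_idl.
  by rewrite E1 comp_assoc l_tau comp_idl.
Qed.

End Iteration.

Lemma final_cia : is_cia bc G1 final_algebra.
Proof.
move=> X e; have [u [Eu Uu]] := T_final (equation_coalgebra e).
have u_inr : u ∘ ι2 = idm T.
  apply: (final_coalgebra_morphism_unique (c := tau)); last by rewrite comp_idr F_id comp_idl.
  by rewrite comp_assoc Eu /equation_coalgebra; cat_simpl; rewrite comp_assoc -F_comp.
have Eu' : u = [u ∘ ι1, idm T] by apply: copair_ext; rewrite ?copair_inl ?copair_inr.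
exists (u ∘ ι1); split.
- by apply/(solution_coalgebra_morphism e); rewrite -Eu'.
- by move=> s /(solution_coalgebra_morphism e) /Uu ->; rewrite copair_inl.
Qed.

Lemma algebra_morphism_iff_solution (B : C) (b : Hom (G0 B) B) (f : Hom Y B) (k : Hom T B) :
  k = [b, idm B] ∘ (G k ⊞ idm B) ∘ ((idm _ ⊞ f) ∘ tau) <->
  is_algebra_morphism G1 final_algebra b k /\ k ∘ final_unit = f.
Proof.
rewrite comp_assoc copair_coprodM copair_coprodM !comp_idl comp_idr /is_algebra_morphism.
split=> [Ek | [E1 E2]].
- by rewrite /final_algebra /final_unit {1 3}Ek; split; cat_simpl; rewrite (comp_rewrite tau_l); cat_simpl.
- transitivity (k ∘ l ∘ tau); first by rewrite comp_assocr l_tau comp_idr.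
  by congr (_ ∘ tau); apply: copair_ext; rewrite ?copair_inl ?copair_inr comp_assocr.
Qed.

Lemma final_free_cia : is_free_cia bc G1 final_algebra final_unit.
Proof.
split; first exact: final_cia.
move=> B b Hb f; have [h [Eh U]] := Hb T ((idm _ ⊞ f) ∘ tau).
exists h; split; first exact/algebra_morphism_iff_solution.
by move=> k /algebra_morphism_iff_solution /U.
Qed.

End FinalCoalgebra.

Section ConstantSummand.
Variables (G0 : C -> C) (G1 : forall X Y : C, Hom X Y -> Hom (G0 X) (G0 Y)).
Local Notation G f := (G1 f).
Variable W : C.
Local Notation GW := (fun (X1 X2 : C) (f : Hom X1 X2) => idm W ⊞ G1 f).

Lemma cia_copair (A : C) (a : Hom (G0 A) A) (w : Hom W A) :
  is_cia bc G1 a -> is_cia bc GW [w, a].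
Proof.
move=> Ha X e.
have transfer (s : Hom X A) : [[w, a], idm A] ∘ ((idm W ⊞ G s) ⊞ idm A) ∘ e
    = [a, idm A] ∘ (G s ⊞ idm A) ∘ ([[ι2 ∘ w, ι1], ι2] ∘ e).
  rewrite [X in _ = X]comp_assoc; congr (_ ∘ e).
  by apply: copair_ext; [apply: copair_ext|]; cat_simpl.
have [s [Es U]] := Ha X ([[ι2 ∘ w, ι1], ι2] ∘ e).
by exists s; split; [rewrite transfer | move=> s'; rewrite transfer; exact: U].
Qed.

Lemma cia_restrict (B : C) (b : Hom (W ⊕ G0 B) B) :
  is_cia bc GW b -> is_cia bc G1 (b ∘ ι2).
Proof.
move=> Hb X e.
have transfer (s : Hom X B) : [b, idm B] ∘ ((idm W ⊞ G s) ⊞ idm B) ∘ ((ι2 ⊞ idm B) ∘ e)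
    = [b ∘ ι2, idm B] ∘ (G s ⊞ idm B) ∘ e.
  rewrite [X in X = _]comp_assoc; congr (_ ∘ e).
  by apply: copair_ext; cat_simpl.
have [s [Es U]] := Hb X ((ι2 ⊞ idm B) ∘ e).
by exists s; split; [rewrite -transfer | move=> s'; rewrite -transfer; exact: U].
Qed.

Lemma free_cia_constant_summand (Y T : C) (a : Hom (G0 T) T) (eta : Hom (W ⊕ Y) T) :
  is_free_cia bc G1 a eta -> is_free_cia bc GW [eta ∘ ι1, a] (eta ∘ ι2).
Proof.
move=> [Ha Hfree]; split; first exact: cia_copair.
move=> B b Hb f.
have [h [[Eh1 Eh2] U]] := Hfree B (b ∘ ι2) (cia_restrict Hb) [b ∘ ι1, f].
rewrite /is_algebra_morphism in Eh1 U *.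
have Eh_inl : h ∘ (eta ∘ ι1) = b ∘ ι1 by rewrite comp_assoc Eh2 copair_inl.
exists h; split.
- split; last by rewrite comp_assoc Eh2 copair_inr.
  apply: copair_ext; cat_simpl; first exact: Eh_inl.
  by rewrite comp_assoc; exact: Eh1.
- move=> k [Ek1 Ek2]; apply: U; split.
  + by move/(f_equal (fun x => x ∘ ι2)): Ek1; cat_simpl.
  + apply: copair_ext; cat_simpl; last exact: Ek2.
    by move/(f_equal (fun x => x ∘ ι1)): Ek1; cat_simpl.
Qed.

End ConstantSummand.

Section InfiniteWords.
Variables (t : Terminal C) (Sg : C).
Local Notation pw n := (pow bp t Sg n).
Local Notation proj n := (powproj bp t Sg n).
Variables (Somega : C) (pi : forall n, Hom Somega (pw n)).
Hypothesis Homega : is_chain_limit (powproj bp t Sg) pi.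

Lemma terminal_ext (Z : C) (h k : Hom Z (t_obj t)) : h = k.
Proof. by rewrite (t_uniq h) (t_uniq k). Qed.

Lemma proj_pi n : proj n ∘ pi (S n) = pi n.
Proof. exact: (proj1 Homega n). Qed.

Definition limit_map (Z : C) (x : forall n, Hom Z (pw n)) (Hx : forall n, proj n ∘ x (S n) = x n) :
  Hom Z Somega := proj1_sig (constructive_indefinite_description _ (proj2 Homega Z x Hx)).

Lemma pi_limit_map (Z : C) (x : forall n, Hom Z (pw n)) (Hx : forall n, proj n ∘ x (S n) = x n) n :
  pi n ∘ limit_map Hx = x n.
Proof. exact: (proj1 (proj2_sig (constructive_indefinite_description _ (proj2 Homega Z x Hx))) n). Qed.

Lemma limit_ext (Z : C) (u v : Hom Z Somega) : (forall n, pi n ∘ u = pi n ∘ v) -> u = v.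
Proof.
move=> E.
have Hx n : proj n ∘ (pi (S n) ∘ v) = pi n ∘ v by rewrite comp_assoc proj_pi.
by have [w [_ U]] := proj2 Homega Z _ Hx; rewrite -(U u) ?(U v).
Qed.

Lemma snd_pi_compatible n : proj n ∘ (π2 ∘ pi (S (S n))) = π2 ∘ pi (S n).
Proof.
have -> : proj n ∘ (π2 ∘ pi (S (S n))) = π2 ∘ proj (S n) ∘ pi (S (S n))
  by rewrite /= snd_prodM comp_assoc.
by rewrite comp_assocr proj_pi.
Qed.

Definition omega_tail : Hom Somega Somega := limit_map snd_pi_compatible.
Definition omega_split : Hom Somega (Sg ⊗ Somega) := ⟨π1 ∘ pi 1, omega_tail⟩.

Lemma fst_pi n : π1 ∘ pi (S n) = π1 ∘ pi 1.
Proof.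
elim: n => // n IHn.
by rewrite -IHn -(proj_pi (S n)) comp_assoc fst_prodM comp_idl.
Qed.

Lemma pi_succ n : pi (S n) = (idm Sg ⊠ pi n) ∘ omega_split.
Proof.
apply: pair_ext; rewrite comp_assoc ?fst_prodM ?snd_prodM comp_assocr ?fst_pair ?snd_pair.
- by rewrite comp_idl fst_pi.
- by rewrite pi_limit_map.
Qed.

Lemma prod_omega_ext (Z : C) (h k : Hom Z (Sg ⊗ Somega)) :
  (forall n, (idm Sg ⊠ pi n) ∘ h = (idm Sg ⊠ pi n) ∘ k) -> h = k.
Proof.
move=> E; apply: pair_ext.
- by move/(f_equal (fun x => π1 ∘ x)): (E 0); cat_simpl.
- apply: limit_ext => n.
  by move/(f_equal (fun x => π2 ∘ x)): (E n); cat_simpl.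
Qed.

Definition cons_approx (n : nat) : Hom (Sg ⊗ Somega) (pw n) :=
  if n is S m return Hom (Sg ⊗ Somega) (pw n) then idm Sg ⊠ pi m else t_bang t _.

Lemma cons_approx_compatible n : proj n ∘ cons_approx (S n) = cons_approx n.
Proof. by case: n => [|n]; [exact: terminal_ext | rewrite /= prodM_comp comp_idl proj_pi]. Qed.

Definition omega_cons : Hom (Sg ⊗ Somega) Somega := limit_map cons_approx_compatible.

Lemma omega_cons_split : omega_cons ∘ omega_split = idm Somega.
Proof.
apply: limit_ext => [[|n]]; first exact: terminal_ext.
by rewrite comp_assoc pi_limit_map comp_idr -pi_succ.
Qed.

Section Unfold.
Variables (Z : C) (d : Hom Z (Sg ⊗ Z)).

Fixpoint unfold_approx (n : nat) : Hom Z (pw n) :=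
  if n is S m then (idm Sg ⊠ unfold_approx m) ∘ d else t_bang t Z.

Lemma unfold_approx_compatible n : proj n ∘ unfold_approx (S n) = unfold_approx n.
Proof.
elim: n => [|n IHn]; first exact: terminal_ext.
by rewrite /= comp_assoc prodM_comp comp_idl IHn.
Qed.

Lemma omega_final : exists! g : Hom Z Somega, omega_split ∘ g = (idm Sg ⊠ g) ∘ d.
Proof.
pose g := limit_map unfold_approx_compatible.
have pi_g n : pi n ∘ g = unfold_approx n by exact: pi_limit_map.
exists g; split.
- apply: prod_omega_ext => n.
  rewrite comp_assoc -pi_succ [X in _ = X]comp_assoc prodM_comp comp_idl pi_g.
  exact: pi_g (S n).
- move=> g' Eg'; apply: limit_ext => n; rewrite pi_g.
  elim: n => [|n IHn]; first exact: terminal_ext.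
  by rewrite pi_succ comp_assocr Eg' comp_assoc prodM_comp comp_idl -IHn.
Qed.

End Unfold.
End InfiniteWords.

Hypotheses (HCC : has_countable_coproducts C) (HU : coproducts_universal C) (HD : coproducts_disjoint C)
  (HCo : coproducts_coherent C) (Hcomm : products_commute_with_coproducts bp).

Definition empty_family (e : Empty_set) : C := match e with end.

Lemma empty_coproduct_initial S (inj : forall e, Hom (empty_family e) S) :
  is_coproduct inj -> is_initial S.
Proof.
move=> H Z; have [h [_ U]] := H Z (fun e => match e with end).
by exists h; split=> // k _; apply: U; case.
Qed.

(* Pulling back the empty coproduct [P] along [f] presents [Z] as an empty coproduct. *)
Lemma initial_strict (Z P : C) (f : Hom Z P) : is_initial P -> is_initial Z.
Proof.
move=> HP.
pose inj (e : Empty_set) : Hom (empty_family e) P := match e with end.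
have Hinj : is_coproduct inj.
  move=> W g; have [h [_ U]] := HP W.
  by exists h; split; [case | move=> k _; exact: U].
have [_ Hpb] := HU countable_Empty_set Hinj f.
pose q (e : Empty_set) : Hom (empty_family e) Z := match e with end.
exact: (empty_coproduct_initial (Hpb _ (fun e => match e with end) q (fun e => match e with end))).
Qed.

Lemma coproduct_injections_disjoint I (A : I -> C) S (inj : forall i, Hom (A i) S) :
  countable I -> is_coproduct inj -> forall i j, i <> j ->
  forall W (a : Hom W (A i)) (b : Hom W (A j)), inj i ∘ a = inj j ∘ b -> is_initial W.
Proof.
move=> cI H i j ij W a b E.
have [P [p [q Hpb]]] := proj1 (HU cI H (inj j)) i.
have HP := proj2 (HD cI H) i j ij P p q Hpb.
have [u _] := proj2 Hpb W a b E.
exact: initial_strict u HP.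
Qed.

Lemma bincoproduct_disjoint (A B S : C) (i1 : Hom A S) (i2 : Hom B S) : is_bincoproduct i1 i2 ->
  forall W (a : Hom W A) (b : Hom W B), i1 ∘ a = i2 ∘ b -> is_initial W.
Proof.
move=> H W a b E.
have tf : true <> false by [].
exact: (@coproduct_injections_disjoint _ _ _ _ countable_bool (bincoproduct_bool_coproduct H)
  true false tf W a b E).
Qed.

Lemma bincoproduct_monic_1 (A B S : C) (i1 : Hom A S) (i2 : Hom B S) :
  is_bincoproduct i1 i2 -> monic i1.
Proof. by move=> H; exact: (proj1 (HD countable_bool (bincoproduct_bool_coproduct H)) true). Qed.

Lemma bincoproduct_monic_2 (A B S : C) (i1 : Hom A S) (i2 : Hom B S) :
  is_bincoproduct i1 i2 -> monic i2.
Proof. by move=> H; exact: (proj1 (HD countable_bool (bincoproduct_bool_coproduct H)) false). Qed.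

Lemma coproduct_initial_pieces I (A : I -> C) S (inj : forall i, Hom (A i) S) :
  countable I -> is_coproduct inj -> forall Z (h : Hom Z S),
  (forall i W (p : Hom W Z) (q : Hom W (A i)), h ∘ p = inj i ∘ q -> is_initial W) -> is_initial Z.
Proof.
move=> cI H Z h Hi.
have [Hex Hcop] := HU cI H h.
have [P [p [q Hpb]]] := choose_pullbacks Hex.
have HQ := Hcop P p q Hpb.
have PI i : is_initial (P i) by apply: (Hi i _ (q i) (p i)); rewrite (proj1 (Hpb i)).
move=> W; exists (coproduct_map HQ (fun i => proj1_sig (constructive_indefinite_description _ (PI i W)))).
by split=> // k _; apply: (coproduct_ext HQ) => i; rewrite coproduct_map_inj; exact: initial_ext.
Qed.

Lemma bincoproduct_factor_2 (A B S : C) (i1 : Hom A S) (i2 : Hom B S) : is_bincoproduct i1 i2 ->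
  forall Z (h : Hom Z S), (forall W (p : Hom W Z) (q : Hom W A), h ∘ p = i1 ∘ q -> is_initial W) ->
  exists h' : Hom Z B, h = i2 ∘ h'.
Proof.
move=> H Z h Hi.
have [Hex Hcop] := HU countable_bool (bincoproduct_bool_coproduct H) h.
have [P [p [q Hpb]]] := choose_pullbacks Hex.
have Hq := bool_coproduct_bincoproduct (Hcop P p q Hpb).
have PI : is_initial (P true) by apply: (Hi _ (q true) (p true)); rewrite (proj1 (Hpb true)).
pose r := bincoproduct_map Hq (proj1_sig (constructive_indefinite_description _ (PI (P false)))) (idm _).
have Er : q false ∘ r = idm _.
  apply: (bincoproduct_ext Hq);
    rewrite comp_assocr ?bincoproduct_map_1 ?bincoproduct_map_2 comp_idl ?comp_idr //.
  exact: initial_ext.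
exists (p false ∘ r).
have Ep : i2 ∘ p false = h ∘ q false := proj1 (Hpb false).
by rewrite comp_assoc Ep comp_assocr Er comp_idr.
Qed.

Lemma pullback_coproduct_injection (A S : C) (m : Hom A S) : is_coproduct_injection m ->
  forall Z (f : Hom Z S),
  exists P (p : Hom P A) (q : Hom P Z), is_pullback m f p q /\ is_coproduct_injection q.
Proof.
move=> [B [n H]] Z f.
have [Hex Hcop] := HU countable_bool (bincoproduct_bool_coproduct H) f.
have [P [p [q Hpb]]] := choose_pullbacks Hex.
exists (P true), (p true), (q true); split; first exact: (Hpb true).
by exists (P false), (q false); exact: (bool_coproduct_bincoproduct (Hcop P p q Hpb)).
Qed.

Lemma coproduct_injection_comp (A S U : C) (a : Hom A S) (j : Hom S U) :
  is_coproduct_injection a -> is_coproduct_injection j -> is_coproduct_injection (j ∘ a).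
Proof.
move=> [B [b Hab]] [D [k Hjk]].
exists (B ⊕ D), [j ∘ b, k] => Z f g.
exists (bincoproduct_map Hjk (bincoproduct_map Hab f (g ∘ ι1)) (g ∘ ι2)); split.
- split; first by rewrite comp_assoc !bincoproduct_map_1.
  by apply: copair_ext;
    rewrite comp_assocr ?copair_inl ?copair_inr ?comp_assoc ?bincoproduct_map_1 ?bincoproduct_map_2.
- move=> h [E1 E2]; apply: (bincoproduct_ext Hjk); rewrite ?bincoproduct_map_1 ?bincoproduct_map_2.
  + by apply: (bincoproduct_ext Hab); rewrite ?bincoproduct_map_1 ?bincoproduct_map_2 -?E1 -?E2; cat_simpl.
  + by rewrite -E2; cat_simpl.
Qed.

Lemma prodM_bincoproduct (X A B S : C) (m : Hom A S) (n : Hom B S) :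
  is_bincoproduct m n -> is_bincoproduct (idm X ⊠ m) (idm X ⊠ n).
Proof.
move=> H; have HX := @Hcomm _ countable_bool _ _ _ (bincoproduct_bool_coproduct H) X.
exact: (bool_coproduct_bincoproduct HX).
Qed.

Lemma inl_inr_disjoint (A B W : C) (a : Hom W A) (b : Hom W B) : ι1 ∘ a = ι2 ∘ b -> is_initial W.
Proof. exact: (bincoproduct_disjoint (@bincoproduct_canonical A B)). Qed.

Record injection_pullback (A S Z : C) (m : Hom A S) (f : Hom Z S) := {
  ipb_obj : C;
  ipb_fst : Hom ipb_obj A;
  ipb_snd : Hom ipb_obj Z;
  ipb_square : is_pullback m f ipb_fst ipb_snd;
  ipb_injection : is_coproduct_injection ipb_snd }.

Definition choose_injection_pullback (A S Z : C) (m : Hom A S) (Hm : is_coproduct_injection m)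
  (f : Hom Z S) :
  injection_pullback m f :=
  let s1 := constructive_indefinite_description _ (pullback_coproduct_injection Hm f) in
  let s2 := constructive_indefinite_description _ (proj2_sig s1) in
  let s3 := constructive_indefinite_description _ (proj2_sig s2) in
  Build_injection_pullback (proj1 (proj2_sig s3)) (proj2 (proj2_sig s3)).

Section Words.
Variables (t : Terminal C) (Sg Sstar : C) (ins : forall n, Hom (pow bp t Sg n) Sstar).
Hypothesis Hstar : is_coproduct ins.
Variables (Somega : C) (pi : forall n, Hom Somega (pow bp t Sg n)).
Hypothesis Homega : is_chain_limit (powproj bp t Sg) pi.
Variable Y : C.

Local Notation pw n := (pow bp t Sg n).
Local Notation T := (Y ⊗ Sstar ⊕ Somega).
Local Notation "Σ× f" := (idm Sg ⊠ f) (at level 35).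

Definition word_inj (n : nat) : Hom (Y ⊗ pw n) (Y ⊗ Sstar) := idm Y ⊠ ins n.

Lemma word_coproduct : is_coproduct word_inj.
Proof. exact: (@Hcomm nat countable_nat _ _ _ Hstar Y). Qed.

Lemma letter_word_coproduct : is_coproduct (fun n => Σ× word_inj n).
Proof. exact: (@Hcomm nat countable_nat _ _ _ word_coproduct Sg). Qed.

(* [(y, ε) ↦ y] and [(y, a w) ↦ (a, (y, w))]. *)
Definition word_out (n : nat) : Hom (Y ⊗ pw n) (Sg ⊗ T ⊕ Y) :=
  if n is S m return Hom (Y ⊗ pw n) (Sg ⊗ T ⊕ Y) then ι1 ∘ Σ× (ι1 ∘ word_inj m) ∘ exch
  else ι2 ∘ π1.

Definition word_tau : Hom T (Sg ⊗ T ⊕ Y) :=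
  [coproduct_map word_coproduct word_out, ι1 ∘ Σ× ι2 ∘ omega_split Homega].

Lemma word_tau_inj n : word_tau ∘ (ι1 ∘ word_inj n) = word_out n.
Proof. by rewrite comp_assoc copair_inl; exact: (coproduct_map_inj word_coproduct). Qed.

Lemma word_tau_inr : word_tau ∘ ι2 = ι1 ∘ Σ× ι2 ∘ omega_split Homega.
Proof. exact: copair_inr. Qed.

Definition word_cons : Hom (Sg ⊗ T) T :=
  bincoproduct_map (prodM_bincoproduct (X := Sg) (@bincoproduct_canonical (Y ⊗ Sstar) Somega))
    (coproduct_map letter_word_coproduct (fun n => ι1 ∘ word_inj (S n) ∘ exch))
    (ι2 ∘ omega_cons Homega).

Lemma word_cons_inj n : word_cons ∘ Σ× (ι1 ∘ word_inj n) = ι1 ∘ word_inj (S n) ∘ exch.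
Proof.
rewrite prodM_idl_comp comp_assoc bincoproduct_map_1.
exact: (coproduct_map_inj letter_word_coproduct).
Qed.

Lemma word_cons_inr : word_cons ∘ Σ× ι2 = ι2 ∘ omega_cons Homega.
Proof. exact: bincoproduct_map_2. Qed.

Definition word_nu : Hom (Sg ⊗ T ⊕ Y) T := [word_cons, ι1 ∘ word_inj 0 ∘ ⟨idm Y, t_bang t Y⟩].

Lemma word_nu_tau : word_nu ∘ word_tau = idm T.
Proof.
have E0 : ⟨idm Y, t_bang t Y⟩ ∘ π1 = idm (Y ⊗ pw 0)
  by apply: pair_ext; cat_simpl; [done | exact: terminal_ext].
apply: copair_ext; rewrite comp_idl !comp_assocr.
- apply: (coproduct_ext word_coproduct) => -[|n]; rewrite !comp_assocr word_tau_inj /word_nu /=.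
  + by rewrite comp_assoc copair_inr comp_assocr E0 comp_idr.
  + by rewrite !comp_assoc copair_inl word_cons_inj !comp_assocr exch_exch comp_idr.
- by rewrite word_tau_inr /word_nu !comp_assoc copair_inl word_cons_inr
    comp_assocr omega_cons_split comp_idr.
Qed.

Section Coalgebra.
Variables (X : C) (c : Hom X (Sg ⊗ X ⊕ Y)).

Record summand := { summand_obj : C; summand_inj : Hom summand_obj X;
  summand_is_injection : is_coproduct_injection summand_inj }.

Lemma inr_injection : is_coproduct_injection (ι2 : Hom Y (Sg ⊗ X ⊕ Y)).
Proof. by exists (Sg ⊗ X), ι1; exact/bincoproduct_sym/bincoproduct_canonical. Qed.

Lemma step_injection (L : summand) :
  is_coproduct_injection (ι1 ∘ Σ× summand_inj L : Hom _ (Sg ⊗ X ⊕ Y)).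
Proof.
apply: (coproduct_injection_comp (U := Sg ⊗ X ⊕ Y)); last first.
  by exists Y, ι2; exact: bincoproduct_canonical.
have [B [n Hn]] := summand_is_injection L.
by exists (Sg ⊗ B), (Σ× n); exact: (prodM_bincoproduct (X := Sg) Hn).
Qed.

Definition level0_pullback := choose_injection_pullback inr_injection c.
Definition step_pullback (L : summand) := choose_injection_pullback (step_injection L) c.

(* [level n] is the part of [X] that reaches [Y] after exactly [n] letters. *)
Fixpoint level (n : nat) : summand :=
  if n is S m then
    let P := step_pullback (level m) in Build_summand (ipb_injection P)
  else Build_summand (ipb_injection level0_pullback).

Definition level_obj (n : nat) : C := summand_obj (level n).
Definition level_inj (n : nat) : Hom (level_obj n) X := summand_inj (level n).
Definition level0_out : Hom (level_obj 0) Y := ipb_fst level0_pullback.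
Definition level_out (n : nat) : Hom (level_obj (S n)) (Sg ⊗ level_obj n) :=
  ipb_fst (step_pullback (level n)).

Lemma c_level0 : c ∘ level_inj 0 = ι2 ∘ level0_out.
Proof. exact: (eq_sym (proj1 (ipb_square level0_pullback))). Qed.

Lemma c_levelS n : c ∘ level_inj (S n) = ι1 ∘ Σ× level_inj n ∘ level_out n.
Proof. exact: (eq_sym (proj1 (ipb_square (step_pullback (level n))))). Qed.

Lemma level0_factor (W : C) (p : Hom W X) (y : Hom W Y) :
  c ∘ p = ι2 ∘ y -> exists z, level_inj 0 ∘ z = p.
Proof.
move=> E; have [z [[_ Hz] _]] := proj2 (ipb_square level0_pullback) W y p (eq_sym E).
by exists z.
Qed.

Lemma levelS_factor n (W : C) (p : Hom W X) (q : Hom W (Sg ⊗ level_obj n)) :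
  c ∘ p = ι1 ∘ Σ× level_inj n ∘ q -> exists z, level_inj (S n) ∘ z = p.
Proof.
move=> E; have [z [[_ Hz] _]] := proj2 (ipb_square (step_pullback (level n))) W q p (eq_sym E).
by exists z.
Qed.

Lemma levels_disjoint i j : i <> j ->
  forall W (a : Hom W (level_obj i)) (b : Hom W (level_obj j)),
  level_inj i ∘ a = level_inj j ∘ b -> is_initial W.
Proof.
elim: i j => [|i IH] [|j] // ij W a b E.
- apply: (inl_inr_disjoint (a := Σ× level_inj j ∘ level_out j ∘ b) (b := level0_out ∘ a)).
  by rewrite -!comp_assocr -c_levelS comp_assocr -E comp_assoc c_level0 comp_assocr.
- apply: (inl_inr_disjoint (a := Σ× level_inj i ∘ level_out i ∘ a) (b := level0_out ∘ b)).
  by rewrite -!comp_assocr -c_levelS comp_assocr E comp_assoc c_level0 comp_assocr.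
- have E2 : Σ× level_inj i ∘ (level_out i ∘ a) = Σ× level_inj j ∘ (level_out j ∘ b).
    apply: (bincoproduct_monic_1 (@bincoproduct_canonical (Sg ⊗ X) Y)).
    by rewrite !comp_assoc -c_levelS -c_levelS !comp_assocr E.
  apply: (IH j _ W (π2 ∘ (level_out i ∘ a)) (π2 ∘ (level_out j ∘ b))); first by congruence.
  by move/(f_equal (fun x => π2 ∘ x)): E2; cat_simpl.
Qed.

Definition levels_sum_spec := constructive_indefinite_description _ (HCC countable_nat level_obj).
Definition levels_sum : C := proj1_sig levels_sum_spec.
Definition levels_sum_inj_spec := constructive_indefinite_description _ (proj2_sig levels_sum_spec).
Definition levels_sum_inj : forall n, Hom (level_obj n) levels_sum := proj1_sig levels_sum_inj_spec.
Definition levels_sum_coproduct : is_coproduct levels_sum_inj := proj2_sig levels_sum_inj_spec.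

Definition levels_map : Hom levels_sum X := coproduct_map levels_sum_coproduct level_inj.

Lemma levels_map_inj n : levels_map ∘ levels_sum_inj n = level_inj n.
Proof. exact: (coproduct_map_inj levels_sum_coproduct). Qed.

(* Coherence: the levels are pairwise disjoint summands of [X], hence so is their sum. *)
Lemma levels_map_injection : is_coproduct_injection levels_map.
Proof.
apply: (HCo countable_nat (m := level_inj) (fun n => summand_is_injection (level n)) _
  levels_sum_coproduct levels_map_inj).
by move=> i j ij Q p q [E _]; exact: (levels_disjoint ij E).
Qed.

Definition rest_spec := constructive_indefinite_description _ levels_map_injection.
Definition rest : C := proj1_sig rest_spec.
Definition rest_inj_spec := constructive_indefinite_description _ (proj2_sig rest_spec).
Definition rest_inj : Hom rest X := proj1_sig rest_inj_spec.
Definition levels_rest_bincoproduct : is_bincoproduct levels_map rest_inj := proj2_sig rest_inj_spec.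

Lemma level_rest_disjoint n (W : C) (z : Hom W (level_obj n)) (b : Hom W rest) :
  level_inj n ∘ z = rest_inj ∘ b -> is_initial W.
Proof.
rewrite -levels_map_inj comp_assocr => E.
exact: (bincoproduct_disjoint levels_rest_bincoproduct E).
Qed.

(* [c ∘ rest_inj] misses [Y], else it would meet level 0, and then misses each [Σ × level n],
   else it would meet level [n + 1]. *)
Lemma c_rest_factor : exists d : Hom rest (Sg ⊗ rest), c ∘ rest_inj = ι1 ∘ Σ× rest_inj ∘ d.
Proof.
have [h Eh] : exists h : Hom rest (Sg ⊗ X), c ∘ rest_inj = ι1 ∘ h.
  apply: (bincoproduct_factor_2 (bincoproduct_sym (@bincoproduct_canonical (Sg ⊗ X) Y))).
  move=> W p y E; rewrite comp_assocr in E.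
  have [z Hz] := level0_factor E.
  exact: (level_rest_disjoint Hz).
have Eh' (W : C) (x : Hom W rest) : c ∘ (rest_inj ∘ x) = ι1 ∘ (h ∘ x)
  by rewrite comp_assoc Eh comp_assocr.
have [d Ed] : exists d, h = Σ× rest_inj ∘ d.
  apply: (bincoproduct_factor_2 (prodM_bincoproduct (X := Sg) levels_rest_bincoproduct)).
  move=> W p q E.
  have Hsum := @Hcomm nat countable_nat _ _ _ levels_sum_coproduct Sg.
  apply: (coproduct_initial_pieces countable_nat Hsum (h := q)).
  move=> i W' p' q' E'.
  have E3 : c ∘ (rest_inj ∘ (p ∘ p')) = ι1 ∘ Σ× level_inj i ∘ q'.
    rewrite Eh' [h ∘ _]comp_assoc E [_ ∘ p']comp_assocr E'.
    by rewrite [X in ι1 ∘ X]comp_assoc -prodM_idl_comp levels_map_inj comp_assoc.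
  have [z Hz] := levelS_factor E3.
  exact: (level_rest_disjoint Hz).
by exists d; rewrite Eh Ed comp_assoc.
Qed.

Definition rest_out : Hom rest (Sg ⊗ rest) :=
  proj1_sig (constructive_indefinite_description _ c_rest_factor).

Lemma c_rest : c ∘ rest_inj = ι1 ∘ Σ× rest_inj ∘ rest_out.
Proof. exact: (proj2_sig (constructive_indefinite_description _ c_rest_factor)). Qed.

Fixpoint level_word (n : nat) : Hom (level_obj n) (Y ⊗ pw n) :=
  if n is S k return Hom (level_obj n) (Y ⊗ pw n) then exch ∘ Σ× level_word k ∘ level_out k
  else ⟨level0_out, t_bang t _⟩.

Definition level_map (n : nat) : Hom (level_obj n) T := ι1 ∘ word_inj n ∘ level_word n.

Definition rest_map_spec := constructive_indefinite_description _ (omega_final Homega rest_out).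
Definition rest_map : Hom rest Somega := proj1_sig rest_map_spec.

Lemma rest_map_split : omega_split Homega ∘ rest_map = Σ× rest_map ∘ rest_out.
Proof. exact: (proj1 (proj2_sig rest_map_spec)). Qed.

Lemma rest_map_unique (g : Hom rest Somega) :
  omega_split Homega ∘ g = Σ× g ∘ rest_out -> g = rest_map.
Proof. by move=> Eg; rewrite -(proj2 (proj2_sig rest_map_spec) g Eg). Qed.

Definition coalgebra_map : Hom X T :=
  bincoproduct_map levels_rest_bincoproduct
    (coproduct_map levels_sum_coproduct level_map) (ι2 ∘ rest_map).

Lemma coalgebra_map_level n : coalgebra_map ∘ level_inj n = level_map n.
Proof.
rewrite -levels_map_inj comp_assoc bincoproduct_map_1.
exact: (coproduct_map_inj levels_sum_coproduct).
Qed.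

Lemma coalgebra_map_rest : coalgebra_map ∘ rest_inj = ι2 ∘ rest_map.
Proof. exact: bincoproduct_map_2. Qed.

Local Notation F f := (Σ× f ⊞ idm Y).

Lemma tau_level_map n : word_tau ∘ level_map n = F coalgebra_map ∘ (c ∘ level_inj n).
Proof.
rewrite /level_map -comp_assocr word_tau_inj.
case: n => [|n] /=.
- by rewrite c_level0; cat_simpl.
- rewrite c_levelS; cat_simpl.
  rewrite (comp_rewrite (exch_exch _ _ _)) comp_idl !(comp_rewrite (prodM_comp _ _ _ _)) !comp_idl.
  by rewrite -comp_assoc coalgebra_map_level /level_map !comp_assocr.
Qed.

Lemma tau_rest_map : word_tau ∘ (ι2 ∘ rest_map) = F coalgebra_map ∘ (c ∘ rest_inj).
Proof.
rewrite comp_assoc word_tau_inr c_rest; cat_simpl.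
by rewrite rest_map_split !(comp_rewrite (prodM_comp _ _ _ _)) !comp_idl coalgebra_map_rest.
Qed.

Lemma coalgebra_map_morphism : word_tau ∘ coalgebra_map = F coalgebra_map ∘ c.
Proof.
apply: (bincoproduct_ext levels_rest_bincoproduct); rewrite !comp_assocr.
- apply: (coproduct_ext levels_sum_coproduct) => n.
  by rewrite !comp_assocr levels_map_inj coalgebra_map_level tau_level_map.
- by rewrite coalgebra_map_rest tau_rest_map.
Qed.

Section Uniqueness.
Variable v : Hom X T.
Hypothesis v_morphism : word_tau ∘ v = F v ∘ c.

Lemma morphism_unfold (W : C) (x : Hom W X) : v ∘ x = word_nu ∘ F v ∘ (c ∘ x).
Proof. by rewrite -[v ∘ x]comp_idl -word_nu_tau !comp_assocr (comp_rewrite v_morphism) !comp_assocr. Qed.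

Lemma morphism_level n : v ∘ level_inj n = level_map n.
Proof.
elim: n => [|n IHn]; rewrite morphism_unfold.
- rewrite c_level0 /level_map /word_nu; cat_simpl.
  by congr (_ ∘ (_ ∘ _)); rewrite pair_comp comp_idl; congr ⟨_, _⟩; exact: terminal_ext.
- rewrite c_levelS /word_nu; cat_simpl.
  rewrite (comp_rewrite (prodM_comp _ _ _ _)) comp_idl IHn /level_map prodM_idl_comp.
  by rewrite !comp_assoc word_cons_inj /= ?comp_assoc.
Qed.

Lemma rest_step : word_tau ∘ (v ∘ rest_inj) = ι1 ∘ Σ× (v ∘ rest_inj) ∘ rest_out.
Proof.
rewrite comp_assoc v_morphism comp_assocr c_rest; cat_simpl.
by rewrite (comp_rewrite (prodM_comp _ _ _ _)) comp_idl.
Qed.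

Lemma rest_avoids_words n (W : C) (p : Hom W rest) (q : Hom W (Y ⊗ pw n)) :
  v ∘ rest_inj ∘ p = ι1 ∘ word_inj n ∘ q -> is_initial W.
Proof.
elim: n W p q => [|n IHn] W p q E;
  have key : ι1 ∘ (Σ× (v ∘ rest_inj) ∘ (rest_out ∘ p)) = word_out _ ∘ q
    by rewrite -word_tau_inj -comp_assoc -E [X in _ = X]comp_assoc rest_step !comp_assocr.
- by move: key; rewrite /= comp_assocr; exact: inl_inr_disjoint.
- have E2 : Σ× (v ∘ rest_inj) ∘ (rest_out ∘ p) = Σ× (ι1 ∘ word_inj n) ∘ (exch ∘ q).
    apply: (bincoproduct_monic_1 (@bincoproduct_canonical (Sg ⊗ T) Y)).
    by rewrite key /= !comp_assocr.
  apply: (IHn W (π2 ∘ (rest_out ∘ p)) (π2 ∘ (exch ∘ q))).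
  by move/(f_equal (fun x => π2 ∘ x)): E2; cat_simpl.
Qed.

Lemma rest_in_omega : exists g : Hom rest Somega, v ∘ rest_inj = ι2 ∘ g.
Proof.
apply: (bincoproduct_factor_2 (@bincoproduct_canonical (Y ⊗ Sstar) Somega)) => W p q E.
apply: (coproduct_initial_pieces countable_nat word_coproduct (h := q)) => n W' p' q' E'.
apply: (rest_avoids_words (p := p ∘ p') (q := q')).
by rewrite comp_assoc E comp_assocr E' comp_assoc.
Qed.

Lemma morphism_rest : v ∘ rest_inj = ι2 ∘ rest_map.
Proof.
have [g Eg] := rest_in_omega; rewrite Eg; congr (_ ∘ _); apply: rest_map_unique.
apply: (prodM_monic (bincoproduct_monic_2 (@bincoproduct_canonical (Y ⊗ Sstar) Somega))).
apply: (bincoproduct_monic_1 (@bincoproduct_canonical (Sg ⊗ T) Y)).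
by have := rest_step; rewrite Eg comp_assoc word_tau_inr prodM_idl_comp !comp_assocr.
Qed.

Lemma morphism_unique : v = coalgebra_map.
Proof.
apply: (bincoproduct_ext levels_rest_bincoproduct).
- apply: (coproduct_ext levels_sum_coproduct) => n.
  by rewrite !comp_assocr levels_map_inj morphism_level coalgebra_map_level.
- by rewrite morphism_rest coalgebra_map_rest.
Qed.

End Uniqueness.
End Coalgebra.

Lemma word_coalgebra_final : is_final_coalgebra (H1 bp Sg) word_tau.
Proof.
move=> X c; exists (coalgebra_map c); split; first exact: coalgebra_map_morphism.
by move=> v Hv; rewrite (morphism_unique Hv).
Qed.

Lemma word_free_cia : exists (a : Hom (H0 bp Sg T) T) (eta : Hom Y T),
  is_free_cia bc (H1 bp Sg) a eta /\ is_iso_obj T (Sstar ⊗ Y ⊕ Somega).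
Proof.
have H1_id (Z : C) : H1 bp Sg (idm Z) = idm _ by exact: prodM_id.
have H1_comp (Z1 Z2 Z3 : C) (f : Hom Z1 Z2) (g : Hom Z2 Z3) :
    H1 bp Sg (g ∘ f) = H1 bp Sg g ∘ H1 bp Sg f.
  by rewrite /H1 prodM_comp comp_idl.
have [l [l_tau tau_l]] := lambek H1_id H1_comp word_coalgebra_final.
exists (final_algebra l), (final_unit l); split; last exact: swap_summand_iso.
exact: (final_free_cia (G1 := H1 bp Sg) H1_id H1_comp word_coalgebra_final l_tau tau_l).
Qed.

End Words.
End FreeCia.

Theorem mainTheorem13
  (C : Category) (HE : hyper_extensive C)
  (t : Terminal C) (bp : forall X Y : C, BinProduct X Y)
  (bc : forall X Y : C, BinCoproduct X Y)
  (HL : has_chain_limits C)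
  (Hcomm : products_commute_with_coproducts bp)
  (Sg : C)
  (Sstar : C) (ins : forall n, Hom (pow bp t Sg n) Sstar)
  (Hstar : is_coproduct ins)
  (Somega : C) (pi : forall n, Hom Somega (pow bp t Sg n))
  (Homega : is_chain_limit (powproj bp t Sg) pi) :
  (forall Y : C,
     exists (T : C) (a : Hom (H0 bp Sg T) T) (eta : Hom Y T),
       is_free_cia bc (H1 bp Sg) a eta /\
       is_iso_obj T (coprodO bc (prodO bp Sstar Y) Somega)) /\
  (forall W Y : C,
     exists (T : C) (a : Hom (H'0 bp bc Sg W T) T) (eta : Hom Y T),
       is_free_cia bc (H'1 bp bc Sg W) a eta /\
       is_iso_obj T (coprodO bc (prodO bp Sstar (coprodO bc W Y)) Somega)).
Proof.
have [HCC [HU [HD HCo]]] := HE.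
have free_H (Y : C) : exists (T : C) (a : Hom (H0 bp Sg T) T) (eta : Hom Y T),
    is_free_cia bc (H1 bp Sg) a eta /\ is_iso_obj T (coprodO bc (prodO bp Sstar Y) Somega).
  by have [a [eta Hfree]] := word_free_cia bc HCC HU HD HCo Hcomm Hstar Homega Y; exists _, a, eta.
split; first exact: free_H.
move=> W Y; have [T [a [eta [Hfree Hiso]]]] := free_H (coprodO bc W Y).
exists T, (copairM bc (eta ∘ inlM bc) a), (eta ∘ inrM bc); split=> //.
exact: free_cia_constant_summand Hfree.
Qed.
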